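(* Let $A=\{a_1,\dots,a_s\}$ and $B=\{b_1,\dots,b_t\}$ with costs $\delta(a_i,b_j)$, demands/capacities $\alpha_i\le\alpha'_i$ and $\beta_j\le\beta'_j\le s$, with $\sum_{i=1}^s\alpha'_i>\sum_{j=1}^t\beta_j$. Let $G$ be the weighted bipartite graph constructed as in the context, let $M$ be a minimum weight perfect matching in $G$, and let $L$ be a minimum-cost MMDC between $A$ and $B$. Then $c(L)\le Weight(Main(M))$.
   Context: A many-to-many matching with demands and capacities (MMDC) between $A$ and $B$ is a set $L\subseteq A\times B$ of pairs such that each $a_i$ occurs in at least $\alpha_i$ and at most $\alpha'_i$ pairs of $L$, and each $b_j$ occurs in at least $\beta_j$ and at most $\beta'_j$ pairs of $L$. Its cost is $c(L)=\sum_{(a_i,b_j)\in L}\delta(a_i,b_j)$; a minimum-cost MMDC is one of least cost. Construction of $G=(S\cup T,E)$. Let $\gamma=\max_{i,j}\delta(a_i,b_j)$ and fix numbers $\gamma',\gamma''$ with $\gamma<\gamma'<\gamma''$. The side $S$ consists of pairwise disjoint sets: for each $1\le i\le s$, $A_i=\{a_{i1},\dots,a_{i\alpha_i}\}$ and $A'_i=\{a'_{i1},\dots,a'_{i(\alpha'_i-\alpha_i)}\}$; for each $1\le j\le t$, $X_j=\{x_{j1},\dots,x_{j(\beta'_j-\beta_j)}\}$ and $W_j=\{w_{j1},\dots,w_{j(s-\beta'_j)}\}$. The side $T$ consists of the vertices $b_{ji}$ ($1\le i\le s$, $1\le j\le t$) together with a set $Y$ of $\sum_i\alpha'_i-\sum_j\beta_j$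 vertices. Write $Bset_i=\{b_{1i},\dots,b_{ti}\}$ and $B_j=\{b_{j1},\dots,b_{js}\}$. The edges are: every vertex of $A_i\cup A'_i$ is joined to every $b_{ji}\in Bset_i$ with weight $\delta(a_i,b_j)$; every vertex of $W_j$ is joined to every vertex of $B_j$ with weight $0$; every vertex of $X_j$ is joined to every vertex of $B_j$ with weight $\gamma'$; every vertex of $X_j$ is joined to every vertex of $Y$ with weight $\gamma''$; every vertex of $A'_i$ is joined to every vertex of $Y$ with weight $\gamma'$. The weight of a set of edges is the sum of their weights. The main edges are the edges between $A_i\cup A'_i$ and $Bset_i$ ($1\le i\le s$); for a matching $M$ in $G$, $Main(M)$ denotes the set of main edges of $M$. *)

From HB Require Import structures.
From mathcomp Require Import all_boot all_order all_algebra.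
Set Implicit Arguments. Unset Strict Implicit. Unset Printing Implicit Defensive.
Import Order.TTheory GRing.Theory Num.Theory.
Local Open Scope ring_scope.

Section MMDC.
Variables (R : realFieldType) (s t : nat) (delta : 'I_s -> 'I_t -> R).
Variables (alpha alpha' : 'I_s -> nat) (beta beta' : 'I_t -> nat).

Definition deg_A (L : {set 'I_s * 'I_t}) (i : 'I_s) : nat :=
  #|[set e in L | e.1 == i]|.
Definition deg_B (L : {set 'I_s * 'I_t}) (j : 'I_t) : nat :=
  #|[set e in L | e.2 == j]|.

Definition is_MMDC (L : {set 'I_s * 'I_t}) : Prop :=
  (forall i, alpha i <= deg_A L i <= alpha' i)%N /\
  (forall j, beta j <= deg_B L j <= beta' j)%N.

Definition cost (L : {set 'I_s * 'I_t}) : R := \sum_(e in L) delta e.1 e.2.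

Definition is_min_MMDC (L : {set 'I_s * 'I_t}) : Prop :=
  is_MMDC L /\ forall L', is_MMDC L' -> cost L <= cost L'.

(* S = (A_i's + A'_i's) + (X_j's + W_j's) *)
Definition Svert : finType :=
  (({i : 'I_s & 'I_(alpha i)} + {i : 'I_s & 'I_(alpha' i - alpha i)}) +
   ({j : 'I_t & 'I_(beta' j - beta j)} + {j : 'I_t & 'I_(s - beta' j)}))%type.

(* T = { b_ji } + Y ; inl (j, i) is b_{ji} *)
Definition Tvert : finType :=
  (('I_t * 'I_s) + 'I_(\sum_i alpha' i - \sum_j beta j))%type.

Variables (gamma' gamma'' : R).

(* None = no edge; Some w = edge of weight w *)
Definition edgeG (u : Svert) (v : Tvert) : option R :=
  match u, v with
  | inl (inl (existT i _)), inl (j, i') => if i' == i then Some (delta i j) else None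
  | inl (inr (existT i _)), inl (j, i') => if i' == i then Some (delta i j) else None
  | inl (inr _), inr _ => Some gamma'
  | inr (inl (existT j _)), inl (j', _) => if j' == j then Some gamma' else None
  | inr (inl _), inr _ => Some gamma''
  | inr (inr (existT j _)), inl (j', _) => if j' == j then Some 0 else None
  | _, _ => None
  end.

Definition is_edge (e : Svert * Tvert) : bool := edgeG e.1 e.2 != None.
Definition wt (e : Svert * Tvert) : R := odflt 0 (edgeG e.1 e.2).

Definition Weight (M : {set Svert * Tvert}) : R := \sum_(e in M) wt e.

Definition is_perfect_matching (M : {set Svert * Tvert}) : Prop :=
  (forall e, e \in M -> is_edge e) /\
  (forall u : Svert, #|[set e in M | e.1 == u]| = 1%N) /\
  (forall v : Tvert, #|[set e in M | e.2 == v]| = 1%N).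

Definition is_min_perfect_matching (M : {set Svert * Tvert}) : Prop :=
  is_perfect_matching M /\
  forall M', is_perfect_matching M' -> Weight M <= Weight M'.

(* main edges: between A_i u A'_i and Bset_i *)
Definition isAvert (u : Svert) : bool := if u is inl _ then true else false.
Definition isBvert (v : Tvert) : bool := if v is inl _ then true else false.
Definition is_main (e : Svert * Tvert) : bool :=
  [&& isAvert e.1, isBvert e.2 & is_edge e].

Definition Main (M : {set Svert * Tvert}) : {set Svert * Tvert} :=
  [set e in M | is_main e].

End MMDC.

From HB Require Import structures.
From mathcomp Require Import all_boot all_order all_algebra.
From mathcomp Require Import zify.
Set Implicit Arguments. Unset Strict Implicit. Unset Printing Implicit Defensive.
Import Order.TTheory GRing.Theory Num.Theory.
Local Open Scope ring_scope.

(* A perfect matching M of G induces the set L_M of pairs (a_i, b_j) such that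
   some copy of a_i is matched to b_ji by a main edge, and c(L_M) is the weight
   of Main(M).  Counting matched vertices shows that L_M is an MMDC: the alpha_i
   vertices of A_i can only be matched into Bset_i by main edges, and only the
   alpha'_i vertices of A_i u A'_i can be matched into Bset_i by main edges at
   all; among the s vertices of B_j, exactly s - beta'_j are matched to W_j, at
   most beta'_j - beta_j to X_j, and the others by main edges.  Hence
   c(L) <= c(L_M) = Weight(Main(M)). *)

Section UniqueFibers.
Variables (T U : finType) (f : T -> U) (M : {set T}).
Hypothesis fiber1 : forall u, #|[set e in M | f e == u]| = 1%N.

Lemma fiber1_witness u : exists2 e, e \in M & f e = u.
Proof.
have /eqP/cards1P [e Me] := fiber1 u.
have : e \in [set x in M | f x == u] by rewrite Me set11.
by rewrite inE => /andP[eM /eqP feu]; exists e.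
Qed.

Lemma fiber1_inj : {in M &, injective f}.
Proof.
move=> e e' eM e'M fee'; have /eqP/cards1P [x Mx] := fiber1 (f e).
have : e \in [set x in M | f x == f e] by rewrite inE eM eqxx.
have : e' \in [set x in M | f x == f e] by rewrite inE e'M -fee' eqxx.
by rewrite Mx !inE => /eqP -> /eqP ->.
Qed.

Lemma card_fiber1_preim (P : {set U}) : #|[set e in M | f e \in P]| = #|P|.
Proof.
rewrite -(card_in_imset (f := f)); last first.
  by apply: sub_in2 fiber1_inj => e /setIdP[].
apply: eq_card => u; apply/imsetP/idP => [[e /setIdP[_ Pe] ->] // | Pu].
have [e eM feu] := fiber1_witness u.
by exists e; rewrite // inE eM feu.
Qed.

End UniqueFibers.

Lemma card_tag_image (I : finType) (T_ : I -> finType) (U : finType)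
    (f : {k : I & T_ k} -> U) (P : {set U}) (i : I) :
  injective f -> (forall x, (f x \in P) = (tag x == i)) -> P \subset codom f ->
  #|P| = #|T_ i|.
Proof.
move=> f_inj fP Pf.
rewrite -cardsT -(card_imset _ (inj_comp f_inj (@eq_from_Tagged _ _ i))).
apply: eq_card => u; apply/idP/imsetP => [Pu | [y _ ->]]; last first.
  by have := fP (Tagged T_ y); rewrite eqxx.
have /codomP [[k y] fky] := subsetP Pf u Pu.
by move: Pu; rewrite fky fP => /eqP /= ik; subst k; exists y.
Qed.

Section MatchingGraph.
Variables (R : realFieldType) (s t : nat) (delta : 'I_s -> 'I_t -> R).
Variables (alpha alpha' : 'I_s -> nat) (beta beta' : 'I_t -> nat) (gamma' gamma'' : R).
Local Notation S := (Svert alpha alpha' beta beta').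
Local Notation T := (Tvert alpha' beta).
Local Notation is_edge := (is_edge delta gamma' gamma'').
Local Notation is_main := (is_main delta gamma' gamma'').
Local Notation wt := (wt delta gamma' gamma'').
Local Notation Main := (Main delta gamma' gamma'').
Local Notation Weight := (Weight delta gamma' gamma'').

Definition A_ i : {set S} := [set u | if u is inl (inl x) then tag x == i else false].
Definition A'_ i : {set S} := [set u | if u is inl (inr x) then tag x == i else false].
Definition X_ j : {set S} := [set u | if u is inr (inl x) then tag x == j else false].
Definition W_ j : {set S} := [set u | if u is inr (inr x) then tag x == j else false].
Definition Bset i : {set T} := [set v | if v is inl (_, i') then i' == i else false].
Definition B_ j : {set T} := [set v | if v is inl (j', _) then j' == j else false].

(* [bvert (i, j)] is the vertex b_ji *)
Definition bvert (p : 'I_s * 'I_t) : T := inl (p.2, p.1).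
Definition main_wt (v : T) : R := if v is inl (j, i) then delta i j else 0.

Lemma bvert_inj : injective bvert.
Proof. by case=> [i j] [i' j'] [-> ->]. Qed.

Lemma card_A_ i : #|A_ i| = alpha i.
Proof.
rewrite -[RHS]card_ord; apply: (card_tag_image (f := fun x => inl (inl x))).
- by move=> x y [].
- by move=> x; rewrite inE.
- by apply/subsetP => -[[x|x]|[x|x]]; rewrite inE // => _; apply: codom_f.
Qed.

Lemma card_A'_ i : #|A'_ i| = (alpha' i - alpha i)%N.
Proof.
rewrite -[RHS]card_ord; apply: (card_tag_image (f := fun x => inl (inr x))).
- by move=> x y [].
- by move=> x; rewrite inE.
- by apply/subsetP => -[[x|x]|[x|x]]; rewrite inE // => _; apply: codom_f.
Qed.

Lemma card_X_ j : #|X_ j| = (beta' j - beta j)%N.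
Proof.
rewrite -[RHS]card_ord; apply: (card_tag_image (f := fun x => inr (inl x))).
- by move=> x y [].
- by move=> x; rewrite inE.
- by apply/subsetP => -[[x|x]|[x|x]]; rewrite inE // => _; apply: codom_f.
Qed.

Lemma card_W_ j : #|W_ j| = (s - beta' j)%N.
Proof.
rewrite -[RHS]card_ord; apply: (card_tag_image (f := fun x => inr (inr x))).
- by move=> x y [].
- by move=> x; rewrite inE.
- by apply/subsetP => -[[x|x]|[x|x]]; rewrite inE // => _; apply: codom_f.
Qed.

Lemma card_B_ j : #|B_ j| = s.
Proof.
have inj : injective (fun k : 'I_s => inl (j, k) : T) by move=> k k' [].
rewrite -[RHS]card_ord -cardsT -(card_imset _ inj).
apply: eq_card => v; apply/idP/imsetP => [|[k _ ->]]; rewrite inE //.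
by case: v => // -[j' k] /= /eqP ->; exists k.
Qed.

Lemma edge_A_ i e : is_edge e -> e.1 \in A_ i -> is_main e && (e.2 \in Bset i).
Proof.
case: e => [[[[i0 x]|[i0 x]]|[[j0 x]|[j0 x]]] [[j1 i1]|y]];
  rewrite /is_main /is_edge !inE //=.
by case: (i1 =P i0) => [-> _ ->|].
Qed.

Lemma main_edge_Bset i e : is_main e -> e.2 \in Bset i -> e.1 \in A_ i :|: A'_ i.
Proof.
case: e => [[[[i0 x]|[i0 x]]|[[j0 x]|[j0 x]]] [[j1 i1]|y]];
  rewrite /is_main /is_edge !inE //=.
all: by case: (i1 =P i0) => [-> _ ->|].
Qed.

Lemma edge_W_ j e : is_edge e -> e.1 \in W_ j -> (e.2 \in B_ j) && ~~ is_main e.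
Proof.
case: e => [[[[i0 x]|[i0 x]]|[[j0 x]|[j0 x]]] [[j1 i1]|y]];
  rewrite /is_main /is_edge !inE //=.
all: by case: (j1 =P j0) => [-> _ ->|].
Qed.

Lemma edge_B_ j e :
  is_edge e -> e.2 \in B_ j -> [|| is_main e, e.1 \in W_ j | e.1 \in X_ j].
Proof.
case: e => [[[[i0 x]|[i0 x]]|[[j0 x]|[j0 x]]] [[j1 i1]|y]];
  rewrite /is_main /is_edge !inE //=.
- by move=> ->.
- by move=> ->.
- by case: (j1 =P j0) => [-> _ ->|].
- by case: (j1 =P j0) => [-> _ ->|].
Qed.

Lemma main_edge_bvert (e : S * T) : is_main e -> e.2 \in codom bvert.
Proof.
by case: e => u [[j i] _ | y]; rewrite /is_main ?andbF //; apply: (codom_f bvert (i, j)).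
Qed.

Lemma main_edge_wt (e : S * T) : is_main e -> wt e = main_wt e.2.
Proof.
case: e => [[[[i0 x]|[i0 x]]|[[j0 x]|[j0 x]]] [[j1 i1]|y]];
  rewrite /is_main /is_edge /wt //=.
all: by case: (i1 =P i0) => [->|].
Qed.

Hypothesis alpha_le : forall i, (alpha i <= alpha' i)%N.
Hypothesis beta_le : forall j, (beta j <= beta' j <= s)%N.
Variable M : {set S * T}.
Hypothesis M_perfect : is_perfect_matching delta gamma' gamma'' M.

Lemma matching_edge e : e \in M -> is_edge e.
Proof. by case: M_perfect => + _; apply. Qed.

Lemma card_matched_S (P : {set S}) : #|[set e in M | e.1 \in P]| = #|P|.
Proof. by case: M_perfect => _ [fiber1 _]; apply: card_fiber1_preim. Qed.

Lemma card_matched_T (P : {set T}) : #|[set e in M | e.2 \in P]| = #|P|.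
Proof. by case: M_perfect => _ [_ fiber1]; apply: card_fiber1_preim. Qed.

Lemma matched_T_inj : {in M &, injective (fun e : S * T => e.2)}.
Proof. by case: M_perfect => _ [_ fiber1]; apply: fiber1_inj. Qed.

Definition L_M : {set 'I_s * 'I_t} := bvert @^-1: [set e.2 | e in Main M].

Lemma bvert_L_M (Q : pred T) :
  bvert @: [set p in L_M | Q (bvert p)] = [set e.2 | e in Main M & Q e.2].
Proof.
apply/setP => v; apply/imsetP/imsetP => [[p /setIdP[] ] | [e /setIdP[eMain Qe] ->]].
  by rewrite inE => /imsetP[e eMain ->] Qe ->; exists e; rewrite // inE eMain.
move: (eMain); rewrite inE => /andP[_ /main_edge_bvert/codomP[p e2]].
exists p => //; rewrite inE /L_M inE -e2 Qe andbT.
by apply/imsetP; exists e.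
Qed.

Lemma card_L_M (Q : pred T) :
  #|[set p in L_M | Q (bvert p)]| = #|[set e in Main M | Q e.2]|.
Proof.
rewrite -(card_imset _ bvert_inj) bvert_L_M card_in_imset //.
by apply: sub_in2 matched_T_inj => e; rewrite !inE => /andP[/andP[]].
Qed.

Lemma cost_L_M : cost delta L_M = Weight (Main M).
Proof.
have L_M_T : [set p in L_M | predT (bvert p)] = L_M.
  by apply/setP => p; rewrite inE andbT.
have Main_T : [set e in Main M | predT e.2] = Main M.
  by apply/setP => e; rewrite inE andbT.
rewrite /cost /Weight.
transitivity (\sum_(p in L_M) main_wt (bvert p)); first by apply: eq_bigr => -[i j].
rewrite -big_imset /=; last by move=> p q _ _; apply: bvert_inj.
rewrite -L_M_T bvert_L_M Main_T big_imset /=; last first.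
  by apply: sub_in2 matched_T_inj => e; rewrite inE => /andP[].
by apply: eq_bigr => e; rewrite inE => /andP[_ /main_edge_wt ->].
Qed.

Lemma deg_A_L_M i : (alpha i <= deg_A L_M i <= alpha' i)%N.
Proof.
have -> : deg_A L_M i = #|[set e in Main M | e.2 \in Bset i]|.
  by rewrite -(card_L_M (mem (Bset i))); apply: eq_card => p; rewrite !inE.
apply/andP; split.
  rewrite -card_A_ -card_matched_S; apply/subset_leq_card/subsetP => e /setIdP[eM eA].
  have /andP[main eB] := edge_A_ (matching_edge eM) eA.
  by apply/setIdP; split => //; rewrite inE eM.
rewrite -(subnKC (alpha_le i)) -card_A'_ -card_A_.
apply: leq_trans (leq_card_setU _ _).1; rewrite -card_matched_S.
apply/subset_leq_card/subsetP => e /setIdP[eMain eB].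
move: (eMain); rewrite inE => /andP[eM main].
by apply/setIdP; split; last exact: main_edge_Bset.
Qed.

Lemma deg_B_L_M j : (beta j <= deg_B L_M j <= beta' j)%N.
Proof.
have -> : deg_B L_M j = #|[set e in Main M | e.2 \in B_ j]|.
  by rewrite -(card_L_M (mem (B_ j))); apply: eq_card => p; rewrite !inE.
set MainB := [set e in Main M | _].
set MB := [set e in M | e.2 \in B_ j].
set MW := [set e in M | e.1 \in W_ j].
set MX := [set e in M | e.1 \in X_ j].
have cardMB : #|MB| = s by rewrite card_matched_T card_B_.
have cardMW : #|MW| = (s - beta' j)%N by rewrite card_matched_S card_W_.
have cardMX : #|MX| = (beta' j - beta j)%N by rewrite card_matched_S card_X_.
have MainB_sub : MainB \subset MB.
  by apply/subsetP => e /setIdP[]; rewrite inE => /andP[eM _] eB; apply/setIdP.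
have MW_sub : MW \subset MB :\: MainB.
  apply/subsetP => e /setIdP[eM eW].
  have /andP[eB not_main] := edge_W_ (matching_edge eM) eW.
  apply/setDP; split; first exact/setIdP.
  by apply/setIdP => -[]; rewrite inE (negbTE not_main) andbF.
have MB_sub : MB \subset MainB :|: MW :|: MX.
  apply/subsetP => e /setIdP[eM eB]; rewrite !in_setU.
  case/or3P: (edge_B_ (matching_edge eM) eB) => [main | eW | eX].
  - by apply/orP; left; apply/orP; left; apply/setIdP; rewrite inE eM main.
  - by apply/orP; left; apply/orP; right; apply/setIdP.
  - by apply/orP; right; apply/setIdP.
have le_MainB := subset_leq_card MainB_sub.
have le_MW := subset_leq_card MW_sub.
have le_MB : (#|MB| <= #|MainB| + #|MW| + #|MX|)%N.
  apply: leq_trans (subset_leq_card MB_sub) _.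
  apply: leq_trans (leq_card_setU _ _).1 _.
  by rewrite leq_add2r; apply: (leq_card_setU _ _).1.
rewrite cardsD (setIidPr MainB_sub) in le_MW.
have := beta_le j; lia.
Qed.

Lemma L_M_MMDC : is_MMDC alpha alpha' beta beta' L_M.
Proof. by split; [apply: deg_A_L_M | apply: deg_B_L_M]. Qed.

End MatchingGraph.

Theorem lemma4 (R : realFieldType) (s t : nat) (delta : 'I_s -> 'I_t -> R)
    (alpha alpha' : 'I_s -> nat) (beta beta' : 'I_t -> nat) (gamma' gamma'' : R)
    (halpha : forall i, (alpha i <= alpha' i)%N)
    (hbeta : forall j, (beta j <= beta' j <= s)%N)
    (hsum : (\sum_j beta j < \sum_i alpha' i)%N)
    (hgamma' : forall i j, delta i j < gamma')
    (hgamma'' : gamma' < gamma'')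
    (M : {set Svert alpha alpha' beta beta' * Tvert alpha' beta})
    (L : {set 'I_s * 'I_t})
    (hM : is_min_perfect_matching delta gamma' gamma'' M)
    (hL : is_min_MMDC delta alpha alpha' beta beta' L) :
  cost delta L <= Weight delta gamma' gamma'' (Main delta gamma' gamma'' M).
Proof.
have [M_perfect _] := hM; have [_ L_min] := hL.
rewrite -(cost_L_M M_perfect).
exact: L_min _ (L_M_MMDC halpha hbeta M_perfect).
Qed.
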